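(* Let $\boldsymbol{y},\boldsymbol{x}\in\mathbb{R}^n$ and let $\boldsymbol{Z}=[\boldsymbol{z}_1\ \cdots\ \boldsymbol{z}_{k_z}]$ be an $n\times k_z$ matrix of full column rank, with $\boldsymbol{x}^T\boldsymbol{P}_Z\boldsymbol{x}\neq0$, $\boldsymbol{z}_\ell^T\boldsymbol{x}\neq0$ and $\boldsymbol{z}_{\ell|\{-\ell\}}^T\boldsymbol{x}\neq 0$ for all $\ell$. Let $\hat{\boldsymbol{\pi}}=(\boldsymbol{Z}^T\boldsymbol{Z})^{-1}\boldsymbol{Z}^T\boldsymbol{x}$ and $w_\ell=\hat\pi_\ell\,\boldsymbol{z}_\ell^T\boldsymbol{x}\,(\boldsymbol{x}^T\boldsymbol{P}_Z\boldsymbol{x})^{-1}$. Then $\sum_{\ell=1}^{k_z}w_\ell=1$ and $$\hat\beta_{2sls}=\sum_{\ell=1}^{k_z}w_\ell\hat\beta_\ell=\sum_{\ell=1}^{k_z}w_\ell\hat\beta^*_\ell .$$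
   Context: $\boldsymbol{P}_A=\boldsymbol{A}(\boldsymbol{A}^T\boldsymbol{A})^{-1}\boldsymbol{A}^T$, $\boldsymbol{M}_A=\boldsymbol{I}_n-\boldsymbol{P}_A$. $\hat\beta_{2sls}=(\boldsymbol{x}^T\boldsymbol{P}_Z\boldsymbol{x})^{-1}\boldsymbol{x}^T\boldsymbol{P}_Z\boldsymbol{y}$. $\boldsymbol{Z}_{\{-\ell\}}$ is $\boldsymbol{Z}$ with column $\boldsymbol{z}_\ell$ removed, $\boldsymbol{z}_{\ell|\{-\ell\}}=\boldsymbol{M}_{Z_{\{-\ell\}}}\boldsymbol{z}_\ell$, $\hat\beta_\ell=\boldsymbol{z}_{\ell|\{-\ell\}}^T\boldsymbol{y}/\boldsymbol{z}_{\ell|\{-\ell\}}^T\boldsymbol{x}$ (the just-identified IV estimator with $\boldsymbol{z}_\ell$ as instrument and the other instruments as controls), and $\hat\beta^*_\ell=\boldsymbol{z}_\ell^T\boldsymbol{y}/\boldsymbol{z}_\ell^T\boldsymbol{x}$ (the just-identified IV estimator with $\boldsymbol{z}_\ell$ as sole instrument and the others omitted). *)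

From HB Require Import structures.
From mathcomp Require Import all_boot all_order all_algebra.
Set Implicit Arguments. Unset Strict Implicit. Unset Printing Implicit Defensive.
Import Order.TTheory GRing.Theory Num.Theory.
Local Open Scope ring_scope.

Definition dotv (R : realFieldType) (n : nat) (u v : 'cV[R]_n) : R :=
  (u^T *m v) 0 0.

Definition projmx (R : realFieldType) (n k : nat) (A : 'M[R]_(n, k)) : 'M[R]_n :=
  A *m invmx (A^T *m A) *m A^T.

Definition annmx (R : realFieldType) (n k : nat) (A : 'M[R]_(n, k)) : 'M[R]_n :=
  1%:M - projmx A.

Definition beta_2sls (R : realFieldType) (n k : nat) (Z : 'M[R]_(n, k))
  (x y : 'cV[R]_n) : R :=
  (dotv x (projmx Z *m x))^-1 * dotv x (projmx Z *m y).

Definition zpartial (R : realFieldType) (n k : nat) (Z : 'M[R]_(n, k.+1))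
  (l : 'I_k.+1) : 'cV[R]_n :=
  annmx (col' l Z) *m col l Z.

Definition beta_l (R : realFieldType) (n k : nat) (Z : 'M[R]_(n, k.+1))
  (x y : 'cV[R]_n) (l : 'I_k.+1) : R :=
  dotv (zpartial Z l) y / dotv (zpartial Z l) x.

Definition beta_star (R : realFieldType) (n k : nat) (Z : 'M[R]_(n, k.+1))
  (x y : 'cV[R]_n) (l : 'I_k.+1) : R :=
  dotv (col l Z) y / dotv (col l Z) x.

Definition pihat (R : realFieldType) (n k : nat) (Z : 'M[R]_(n, k))
  (x : 'cV[R]_n) : 'cV[R]_k :=
  invmx (Z^T *m Z) *m Z^T *m x.

Definition wgt (R : realFieldType) (n k : nat) (Z : 'M[R]_(n, k.+1))
  (x : 'cV[R]_n) (l : 'I_k.+1) : R :=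
  pihat Z x l 0 * dotv (col l Z) x * (dotv x (projmx Z *m x))^-1.

(* Since P_Z v = Z pihat(v), the quadratic form x^T P_Z v expands as
   sum_l pihat(v)_l z_l^T x.  With v = x this is sum_l w_l = 1; with v = y,
   after swapping x and y by the symmetry of P_Z, it is the decomposition over
   the beta*_l.  For the beta_l, the Frisch-Waugh-Lovell identity
   z_{l|-l}^T v = pihat(v)_l z_{l|-l}^T z_l gives
   beta_l = pihat(y)_l / pihat(x)_l, so that
   w_l beta_l = pihat(y)_l z_l^T x / x^T P_Z x, which sums to beta_2sls.
   Full column rank of Z makes every Gram matrix appearing in the definitions
   invertible, Z^T Z as well as each Z_{-l}^T Z_{-l}. *)

From HB Require Import structures.
From mathcomp Require Import all_boot all_order all_algebra.
From mathcomp Require Import ring.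
Import Order.TTheory GRing.Theory Num.Theory.
Set Implicit Arguments.
Unset Strict Implicit.
Unset Printing Implicit Defensive.

Local Open Scope ring_scope.

Lemma row_free_row' (F : fieldType) m n (M : 'M[F]_(m.+1, n)) (l : 'I_m.+1) :
  row_free M -> row_free (row' l M).
Proof.
move=> Mfree; apply: inj_row_free => v vM0.
pose v' := \row_i oapp (v 0) 0 (unlift l i).
have : v' *m M = 0.
  rewrite mulmx_sum_row (bigD1_ord l) //= !mxE unlift_none scale0r add0r.
  rewrite -[RHS]vM0 mulmx_sum_row; apply: eq_bigr => j _.
  by rewrite !mxE liftK row_rowsub.
move/eqP; rewrite mulmx_free_eq0 // => /eqP v'0.
apply/rowP => j; have := congr1 (fun w : 'rV_m.+1 => w 0 (lift l j)) v'0.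
by rewrite !mxE liftK.
Qed.

Lemma mulmx_trmx_row_eq0 (R : realDomainType) n (w : 'rV[R]_n) :
  (w *m w^T == 0) = (w == 0).
Proof.
apply/eqP/eqP => [ww0|->]; last by rewrite mul0mx.
have := congr1 (fun M : 'M[R]_1 => M 0 0) ww0; rewrite !mxE => /eqP.
rewrite psumr_eq0 => [/allP w0|i _]; last by rewrite !mxE -expr2 sqr_ge0.
apply/rowP => i; have := w0 i (mem_index_enum _).
by rewrite !mxE -expr2 sqrf_eq0 => /eqP.
Qed.

Lemma gram_unitmx (R : realFieldType) n m (A : 'M[R]_(n, m)) :
  row_free A^T -> A^T *m A \in unitmx.
Proof.
move=> Afree; rewrite -row_free_unit; apply: inj_row_free => v vAA0.
have /eqP : (v *m A^T) *m (v *m A^T)^T = 0.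
  by rewrite trmx_mul trmxK !mulmxA -(mulmxA v) vAA0 mul0mx.
by rewrite mulmx_trmx_row_eq0 mulmx_free_eq0 // => /eqP.
Qed.

Section LeastSquares.
Variable R : realFieldType.

Lemma dotvC n (u v : 'cV[R]_n) : dotv u v = dotv v u.
Proof. by rewrite /dotv -[in RHS](trmxK u) -trmx_mul [RHS]mxE. Qed.

Lemma dotvDr n (u v w : 'cV[R]_n) : dotv u (v + w) = dotv u v + dotv u w.
Proof. by rewrite /dotv mulmxDr mxE. Qed.

Lemma dotv_mulmx n m (u : 'cV[R]_n) (A : 'M[R]_(n, m)) (p : 'cV[R]_m) :
  dotv u (A *m p) = dotv (A^T *m u) p.
Proof. by rewrite /dotv trmx_mul trmxK mulmxA. Qed.

Lemma dotv_col n m (A : 'M[R]_(n, m)) i (w : 'cV[R]_n) :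
  dotv (col i A) w = (A^T *m w) i 0.
Proof. by rewrite /dotv tr_col -row_mul mxE. Qed.

Lemma dotv_mulmx_cols n m (u : 'cV[R]_n) (A : 'M[R]_(n, m)) (p : 'cV[R]_m) :
  dotv u (A *m p) = \sum_(i < m) p i 0 * dotv (col i A) u.
Proof.
rewrite dotv_mulmx dotvC {1}/dotv mxE; apply: eq_bigr => i _.
by rewrite dotv_col mxE mulrC.
Qed.

Lemma trmx_projmx n m (A : 'M[R]_(n, m)) : (projmx A)^T = projmx A.
Proof. by rewrite /projmx !trmx_mul trmxK trmx_inv trmx_mul trmxK mulmxA. Qed.

Lemma trmx_annmx n m (A : 'M[R]_(n, m)) : (annmx A)^T = annmx A.
Proof. by rewrite /annmx linearB /= trmx1 trmx_projmx. Qed.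

Lemma projmx_pihat n m (Z : 'M[R]_(n, m)) (v : 'cV[R]_n) :
  projmx Z *m v = Z *m pihat Z v.
Proof. by rewrite /projmx /pihat !mulmxA. Qed.

Lemma dotv_projmx n m (Z : 'M[R]_(n, m)) (u v : 'cV[R]_n) :
  dotv u (projmx Z *m v) = \sum_(l < m) pihat Z v l 0 * dotv (col l Z) u.
Proof. by rewrite projmx_pihat dotv_mulmx_cols. Qed.

Lemma dotv_projmxC n m (Z : 'M[R]_(n, m)) (u v : 'cV[R]_n) :
  dotv u (projmx Z *m v) = dotv v (projmx Z *m u).
Proof. by rewrite dotv_mulmx trmx_projmx dotvC. Qed.

Lemma projmx_mul_id n m (A : 'M[R]_(n, m)) :
  A^T *m A \in unitmx -> projmx A *m A = A.
Proof. by move=> AA; rewrite /projmx -!mulmxA mulVmx // mulmx1. Qed.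

Lemma annmx_mul_eq0 n m (A : 'M[R]_(n, m)) :
  A^T *m A \in unitmx -> annmx A *m A = 0.
Proof. by move=> AA; rewrite /annmx mulmxBl mul1mx projmx_mul_id // subrr. Qed.

Lemma annmx_mul_ortho n m (A : 'M[R]_(n, m)) (w : 'cV[R]_n) :
  A^T *m w = 0 -> annmx A *m w = w.
Proof.
by move=> Aw0; rewrite /annmx mulmxBl mul1mx /projmx -!mulmxA Aw0 !mulmx0 subr0.
Qed.

Lemma pihat_residual_ortho n m (Z : 'M[R]_(n, m)) (v : 'cV[R]_n) :
  Z^T *m Z \in unitmx -> Z^T *m (v - Z *m pihat Z v) = 0.
Proof. by move=> ZZ; rewrite mulmxBr /pihat !mulmxA mulmxV // mul1mx subrr. Qed.

Section FrischWaughLovell.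
Variables (n k : nat) (Z : 'M[R]_(n, k.+1)) (l : 'I_k.+1).
Hypotheses (ZZ : Z^T *m Z \in unitmx)
  (AA : (col' l Z)^T *m col' l Z \in unitmx).

Lemma dotv_zpartial_ortho (w : 'cV[R]_n) :
  Z^T *m w = 0 -> dotv (zpartial Z l) w = 0.
Proof.
move=> Zw0; have Aw0 : (col' l Z)^T *m w = 0.
  by rewrite tr_col' row'Esub mul_rowsub_mx Zw0 -row'Esub row'_const.
rewrite /zpartial dotvC dotv_mulmx trmx_annmx annmx_mul_ortho //.
by rewrite dotvC dotv_col Zw0 mxE.
Qed.

Lemma dotv_zpartial_col' j : dotv (col (lift l j) Z) (zpartial Z l) = 0.
Proof.
rewrite /zpartial dotv_mulmx trmx_annmx -(col_colsub (lift l)) -col'Esub.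
rewrite colEsub mulmx_colsub annmx_mul_eq0 // -colEsub col0.
by rewrite /dotv trmx0 mul0mx mxE.
Qed.

Lemma dotv_zpartial (v : 'cV[R]_n) :
  dotv (zpartial Z l) v = pihat Z v l 0 * dotv (zpartial Z l) (col l Z).
Proof.
rewrite -{1}[v](subrK (Z *m pihat Z v)) dotvDr.
rewrite dotv_zpartial_ortho ?pihat_residual_ortho // add0r dotv_mulmx_cols.
rewrite (bigD1_ord l) //= big1 ?addr0 => [|j _]; last first.
  by rewrite dotv_zpartial_col' mulr0.
by rewrite dotvC.
Qed.
End FrischWaughLovell.
End LeastSquares.

Theorem mainTheorem2 (R : realFieldType) (n k : nat)
  (y x : 'cV[R]_n) (Z : 'M[R]_(n, k.+1))
  (hrank : \rank Z = k.+1)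
  (hPZ : dotv x (projmx Z *m x) != 0)
  (hzx : forall l : 'I_k.+1, dotv (col l Z) x != 0)
  (hzpx : forall l : 'I_k.+1, dotv (zpartial Z l) x != 0) :
  \sum_(l < k.+1) wgt Z x l = 1 /\
  beta_2sls Z x y = \sum_(l < k.+1) wgt Z x l * beta_l Z x y l /\
  beta_2sls Z x y = \sum_(l < k.+1) wgt Z x l * beta_star Z x y l.
Proof.
have Zfree : row_free Z^T by rewrite /row_free mxrank_tr hrank.
have ZZ := gram_unitmx Zfree.
have AA l : (col' l Z)^T *m col' l Z \in unitmx.
  by apply: gram_unitmx; rewrite tr_col' row_free_row'.
split; first by rewrite /wgt -mulr_suml -dotv_projmx mulfV.
rewrite /beta_2sls; split.
- rewrite [dotv x (_ *m y)]dotv_projmx mulr_sumr; apply: eq_bigr => l _.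
  have FWL := dotv_zpartial ZZ (AA l).
  have := hzpx l; rewrite /beta_l FWL [dotv _ y]FWL.
  rewrite mulf_eq0 negb_or => /andP[pix_neq0 zpz_neq0].
  by rewrite /wgt; field; rewrite pix_neq0 zpz_neq0 hPZ.
- rewrite [dotv x (_ *m y)]dotv_projmxC [dotv y _]dotv_projmx mulr_sumr.
  apply: eq_bigr => l _.
  by rewrite /wgt /beta_star; field; rewrite hzx hPZ.
Qed.
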